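(* Let $\mathbb{R}$ be stratified into vertices (points) and edges (open intervals), and let $\mathcal{F}$ be a cellular sheaf of cones on $\mathbb{R}$ with respect to this stratification. Then $$\Gamma(\mathcal{F})=\prod_{v}\mathcal{F}(v)\;\cap\;\ker\Big(\prod_v\mathcal{F}^{\pm}(v)\longrightarrow\prod_e\mathcal{F}^{\pm}(e),\ (\phi_v)_v\mapsto\big(\mathcal{F}^\pm(e_-\leqslant e)(\phi_{e_-})-\mathcal{F}^\pm(e_+\leqslant e)(\phi_{e_+})\big)_e\Big),$$ where $v$ ranges over all vertices, $e$ ranges over all precompact (bounded) edges, and $e_-<e_+$ are the two endpoints of a bounded edge $e$.
   Context: A cone is a (possibly empty) subset of a real vector space closed under addition and multiplication by positive reals; the category of cones has as morphisms functions between cones that are restrictions/corestrictions of linear maps between the vector spaces spanned by the cones. A cellular sheaf of cones on $\mathbb{R}$ (with respect to a stratification into vertices and edges) is a functor $\mathcal{F}$ from the poset of cells (with $v\leqslant e$ when the vertex $v$ is in the closure of the edge $e$) to the category of cones. Its global sections are $\Gamma(\mathcal{F})=\lim_c\mathcal{F}(c)$, the limit over all cells taken in the category of cones. For a cell $c$, $\mathcal{F}^\pm(c)$ denotes the real vector space spanned by $\mathcal{F}(c)$, and $\mathcal{F}^\pm(v\leqslant e)$ the unique linear extension of $\mathcal{F}(v\leqslant e)$. *)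

From HB Require Import structures.
From mathcomp Require Import all_boot all_order all_algebra.
From mathcomp Require Import all_classical all_reals.
Set Implicit Arguments. Unset Strict Implicit. Unset Printing Implicit Defensive.
Import Order.TTheory GRing.Theory Num.Theory.
Local Open Scope ring_scope.
Local Open Scope classical_set_scope.

Section DProd.
Variables (R : pzRingType) (I : Type) (V : I -> lmodType R).

Definition dprod : Type := forall i, V i.
HB.instance Definition _ := Choice.on dprod.

Definition dprod_zero : dprod := fun i => 0.
Definition dprod_add (f g : dprod) : dprod := fun i => f i + g i.
Definition dprod_opp (f : dprod) : dprod := fun i => - f i.
Definition dprod_scale (a : R) (f : dprod) : dprod := fun i => a *: f i.

Let feq (f g : dprod) : (forall i, f i = g i) -> f = g.
Proof. by move=> h; apply: functional_extensionality_dep. Qed.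

Let addA : associative dprod_add.
Proof. by move=> f g h; apply: feq => i; rewrite /dprod_add addrA. Qed.
Let addC : commutative dprod_add.
Proof. by move=> f g; apply: feq => i; rewrite /dprod_add addrC. Qed.
Let add0 : left_id dprod_zero dprod_add.
Proof. by move=> f; apply: feq => i; rewrite /dprod_add /dprod_zero add0r. Qed.
Let addN : left_inverse dprod_zero dprod_opp dprod_add.
Proof. by move=> f; apply: feq => i; rewrite /dprod_add /dprod_opp /dprod_zero addNr. Qed.

HB.instance Definition _ := @GRing.isNmodule.Build dprod dprod_zero dprod_add addA addC add0.
HB.instance Definition _ := @GRing.Nmodule_isZmodule.Build dprod dprod_opp addN.

Let scA : forall a b (f : dprod), dprod_scale a (dprod_scale b f) = dprod_scale (a * b) f.
Proof. by move=> a b f; apply: feq => i; rewrite /dprod_scale scalerA. Qed.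
Let sc1 : left_id 1 dprod_scale.
Proof. by move=> f; apply: feq => i; rewrite /dprod_scale scale1r. Qed.
Let scDr : right_distributive dprod_scale +%R.
Proof. by move=> a f g; apply: feq => i; rewrite /dprod_scale /= /dprod_add scalerDr. Qed.
Let scDl : forall f : dprod, {morph dprod_scale^~ f : a b / a + b}.
Proof. by move=> f a b; apply: feq => i; rewrite /dprod_scale /= /dprod_add scalerDl. Qed.

HB.instance Definition _ := @GRing.Zmodule_isLmodule.Build R dprod dprod_scale scA sc1 scDr scDl.

End DProd.

(* An object is a pair (V, C) with V a real vector space and C a cone *)
(* in V (possibly empty).  A morphism (V,C) -> (W,D) is represented   *)
(* by a function f : V -> W (only its values on C matter) mapping C   *)
(* into D which is the restriction to C of a linear map               *)
(* span C -> span D.  Two morphisms are equal iff they agree on C.    *)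
Section Cones.
Variable R : realType.

Definition is_cone (V : lmodType R) (C : set V) : Prop :=
  (forall x y, C x -> C y -> C (x + y)) /\
  (forall (a : R) x, 0 < a -> C x -> C (a *: x)).

Definition span (V : lmodType R) (C : set V) : set V :=
  [set x | exists s : seq (R * V),
     (forall p, p \in s -> C p.2) /\ x = \sum_(p <- s) p.1 *: p.2].

Definition linear_on (V W : lmodType R) (A : set V) (g : V -> W) : Prop :=
  forall (a : R) x y, A x -> A y -> g (a *: x + y) = a *: g x + g y.

Definition cone_morphism (V W : lmodType R) (C : set V) (D : set W)
    (f : V -> W) : Prop :=
  (forall x, C x -> D (f x)) /\
  exists g : V -> W,
    [/\ linear_on (span C) g,
        (forall x, span C x -> span D (g x)) &
        (forall x, C x -> g x = f x)].

(* The vertex set Vt is a closed discrete (= locally finite) subset;  *)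
(* the edges are the connected components of R \ Vt, i.e. the open    *)
(* intervals ]lo, hi[ with lo, hi consecutive in Vt u {-oo, +oo}.     *)
Definition locally_finite (Vt : set R) : Prop :=
  forall a b : R, finite_set [set x | Vt x /\ a <= x <= b].

Definition vertex (Vt : set R) : Type := {x : R | Vt x}.

Definition is_edge (Vt : set R) (p : \bar R * \bar R) : Prop :=
  [/\ (p.1 < p.2)%E,
      (p.1 = -oo%E \/ exists2 a, p.1 = a%:E & Vt a),
      (p.2 = +oo%E \/ exists2 b, p.2 = b%:E & Vt b) &
      (forall x, Vt x -> ~ (p.1 < x%:E < p.2)%E)].

Definition edge (Vt : set R) : Type := {p : \bar R * \bar R | is_edge Vt p}.

(* v <= e : the vertex v lies in the closure of the edge e *)
Definition incident (Vt : set R) (v : vertex Vt) (e : edge Vt) : Prop :=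
  (sval e).1 = (sval v)%:E \/ (sval e).2 = (sval v)%:E.

(* A cellular sheaf of cones: a functor from the cell poset to cones.
   The only non-identity arrows are v <= e, so it amounts to cones
   F(v), F(e) and a cone morphism F(v <= e) for each incidence
   (res v e is irrelevant for non-incident pairs). *)
Unset Implicit Arguments.
Record cone_sheaf (Vt : set R) := ConeSheaf {
  FV : vertex Vt -> lmodType R;
  FE : edge Vt -> lmodType R;
  CV : forall v, set (FV v);
  CE : forall e, set (FE e);
  res : forall v e, FV v -> FE e;
  CV_cone : forall w, is_cone (CV w);
  CE_cone : forall d, is_cone (CE d);
  res_mor : forall w d, incident w d -> cone_morphism (CV w) (CE d) (res w d)
}.
Set Implicit Arguments.
Arguments FV {Vt} F v : rename.
Arguments FE {Vt} F e : rename.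
Arguments CV {Vt} F v : rename.
Arguments CE {Vt} F e : rename.
Arguments res {Vt} F v e : rename.

Definition cone_over (Vt : set R) (F : cone_sheaf Vt)
    (X : lmodType R) (K : set X)
    (qV : forall v, X -> FV F v) (qE : forall e, X -> FE F e) : Prop :=
  [/\ is_cone K,
      (forall v, cone_morphism K (CV F v) (qV v)),
      (forall e, cone_morphism K (CE F e) (qE e)) &
      (forall v e, incident v e -> forall x, K x -> res F v e (qV v x) = qE e x)].
Arguments cone_over {Vt} F {X} K qV qE.

Definition is_limit (Vt : set R) (F : cone_sheaf Vt)
    (L : lmodType R) (S : set L)
    (pV : forall v, L -> FV F v) (pE : forall e, L -> FE F e) : Prop :=
  cone_over F S pV pE /\
  forall (X : lmodType R) (K : set X) qV qE, cone_over F K qV qE ->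
    let factors (u : X -> L) :=
      [/\ cone_morphism K S u,
          (forall v x, K x -> pV v (u x) = qV v x) &
          (forall e x, K x -> pE e (u x) = qE e x)] in
    (exists u, factors u) /\
    (forall u u', factors u -> factors u' -> forall x, K x -> u x = u' x).
Arguments is_limit {Vt} F {L} S pV pE.

End Cones.
Arguments cone_sheaf {R} Vt.
Arguments ConeSheaf {R Vt}.
Arguments FV {R Vt} F v : rename.
Arguments FE {R Vt} F e : rename.
Arguments CV {R Vt} F v : rename.
Arguments CE {R Vt} F e : rename.
Arguments res {R Vt} F v e : rename.
Arguments cone_over {R Vt} F {X} K qV qE.
Arguments is_limit {R Vt} F {L} S pV pE.

From Pilot Require Import Defs.
From HB Require Import structures.
From mathcomp Require Import all_boot all_order all_algebra.
From mathcomp Require Import all_classical all_reals.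
Import Order.TTheory GRing.Theory Num.Theory.
Local Open Scope ring_scope.
Local Open Scope classical_set_scope.

(* The candidate limit is the set of families of vertex sections whose two
   restrictions to every bounded edge agree, with the vertex projections as
   legs; the leg to an edge is the restriction from any one of its endpoints,
   which exists because Vt is nonempty and does not depend on the endpoint by
   the agreement condition.  A cone over F factors through it by tupling its
   vertex legs, and uniquely so since the vertex legs determine the family. *)

Set Implicit Arguments.
Unset Strict Implicit.

Section ConeMorphisms.
Variable R : realType.
Implicit Types V W X : lmodType R.

Lemma span_sub V (C : set V) x : C x -> Defs.span C x.
Proof.
move=> Cx; exists [:: (1, x)]; split; last by rewrite big_seq1 scale1r.
by move=> p; rewrite inE => /eqP ->.
Qed.

Lemma span0 V (C : set V) : Defs.span C 0.
Proof. by exists [::]; split => //; rewrite big_nil. Qed.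

Lemma linear_on0 V W (A : set V) (g : V -> W) : linear_on A g -> A 0 -> g 0 = 0.
Proof.
move=> lin_g A0; have := lin_g 1 0 0 A0 A0; rewrite !scale1r addr0 => g00.
by apply: (@addrI _ (g 0)); rewrite addr0 -g00.
Qed.

Lemma linear_on_sum V W (C : set V) (g : V -> W) (s : seq (R * V)) :
  linear_on (Defs.span C) g -> (forall p, p \in s -> C p.2) ->
  g (\sum_(p <- s) p.1 *: p.2) = \sum_(p <- s) p.1 *: g p.2.
Proof.
move=> lin_g; elim: s => [|p s IHs] Cs.
  by rewrite !big_nil (linear_on0 lin_g (span0 C)).
have Cs' q : q \in s -> C q.2 by move=> qs; apply: Cs; rewrite inE qs orbT.
rewrite !big_cons lin_g ?IHs //; first by apply/span_sub/Cs; rewrite inE eqxx.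
by exists s.
Qed.

Lemma span_linear_image V W (C : set V) (D : set W) (g : V -> W) :
  linear_on (Defs.span C) g -> (forall x, C x -> D (g x)) ->
  forall x, Defs.span C x -> Defs.span D (g x).
Proof.
move=> lin_g gCD _ [s [Cs ->]]; exists [seq (p.1, g p.2) | p <- s]; split.
  by move=> _ /mapP [q qs ->]; apply/gCD/Cs.
by rewrite big_map (linear_on_sum lin_g Cs).
Qed.

Lemma cone_morphismD V W (C : set V) (D : set W) f x y :
  cone_morphism C D f -> is_cone C -> C x -> C y -> f (x + y) = f x + f y.
Proof.
move=> [_ [g [lin_g _ gf]]] [C_add _] Cx Cy.
rewrite -!gf //; last exact: C_add.
by have := lin_g 1 x y (span_sub Cx) (span_sub Cy); rewrite !scale1r.
Qed.

Lemma cone_morphismZ V W (C : set V) (D : set W) f (a : R) x :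
  cone_morphism C D f -> is_cone C -> 0 < a -> C x -> f (a *: x) = a *: f x.
Proof.
move=> [_ [g [lin_g _ gf]]] [_ C_scale] a_gt0 Cx.
rewrite -!gf //; last exact: C_scale.
have := lin_g a x 0 (span_sub Cx) (span0 C).
by rewrite !addr0 (linear_on0 lin_g (span0 C)) addr0.
Qed.

Lemma cone_morphism_comp V W X (A : set V) (B : set W) (C : set X) f g :
  cone_morphism A B f -> cone_morphism B C g -> cone_morphism A C (g \o f).
Proof.
move=> [fAB [f' [lin_f' f'AB f'f]]] [gBC [g' [lin_g' g'BC g'g]]].
split=> [x Ax|]; first exact/gBC/fAB.
exists (g' \o f'); split=> [a x y Ax Ay|x Ax|x Ax] /=.
- by rewrite lin_f' // lin_g' //; apply: f'AB.
- exact/g'BC/f'AB.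
- by rewrite f'f // g'g //; apply: fAB.
Qed.

Section Products.
Variables (I : Type) (V : I -> lmodType R).

Lemma cone_morphism_proj (S : set (dprod V)) (C : forall i, set (V i)) i :
  (forall x, S x -> C i (x i)) -> cone_morphism S (C i) (fun x => x i).
Proof.
move=> SC; split=> //; exists (fun x => x i); split=> //.
exact: (span_linear_image (C := S) (D := C i) (g := fun x => x i)).
Qed.

Lemma cone_morphism_tuple X (K : set X) (S : set (dprod V))
    (C : forall i, set (V i)) (f : forall i, X -> V i) :
  (forall i, cone_morphism K (C i) (f i)) ->
  (forall x, K x -> S (fun i => f i x)) ->
  cone_morphism K S (fun x i => f i x).
Proof.
move=> f_mor KS; split=> //.
pose g i := projT1 (cid (f_mor i).2).
have g_ext i := projT2 (cid (f_mor i).2).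
have lin_g : linear_on (Defs.span K) (fun x => (fun i => g i x) : dprod V).
  move=> a x y Kx Ky; apply: functional_extensionality_dep => i.
  by case: (g_ext i) => lin_gi _ _; exact: lin_gi.
have gf x : K x -> (fun i => g i x) = (fun i => f i x) :> dprod V.
  move=> Kx; apply: functional_extensionality_dep => i.
  by case: (g_ext i) => _ _ gif; exact: gif.
exists (fun x i => g i x); split=> //.
by apply: span_linear_image => // y Ky; rewrite gf //; apply: KS.
Qed.

End Products.
End ConeMorphisms.

Section GlobalSections.
Variables (R : realType) (Vt : set R) (F : cone_sheaf Vt).

Definition sections : set (dprod (FV F)) :=
  [set phi : dprod (FV F) |
     (forall v, CV F v (phi v)) /\
     (forall (e : edge Vt) (a b : vertex Vt),
        (sval e).1 = (sval a)%:E -> (sval e).2 = (sval b)%:E ->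
        res F a e (phi a) - res F b e (phi b) = 0)].

Lemma edge_has_vertex : Vt !=set0 -> forall e : edge Vt, exists v, incident v e.
Proof.
move=> [x Vx] [[lo hi] [lo_lt_hi lo_vertex hi_vertex no_vertex]].
case: lo_vertex => [lo_inf|[a lo_a Va]]; last by exists (exist _ a Va); left.
case: hi_vertex => [hi_inf|[b hi_b Vb]]; last by exists (exist _ b Vb); right.
by exfalso; apply: (no_vertex x Vx); rewrite lo_inf hi_inf ltNyr ltry.
Qed.

Lemma sections_cone : is_cone sections.
Proof.
have res_lo a e (ea : (sval e).1 = (sval a)%:E) := res_mor _ _ F a e (or_introl ea).
have res_hi b e (eb : (sval e).2 = (sval b)%:E) := res_mor _ _ F b e (or_intror eb).
split=> [x y [Cx Ex] [Cy Ey] | c x c_gt0 [Cx Ex]]; split.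
- by move=> v; apply: (CV_cone _ _ F v).1.
- move=> e a b ea eb.
  rewrite (cone_morphismD (res_lo a e ea) (CV_cone _ _ F a)) //.
  rewrite (cone_morphismD (res_hi b e eb) (CV_cone _ _ F b)) //.
  by rewrite (subr0_eq (Ex e a b ea eb)) (subr0_eq (Ey e a b ea eb)) subrr.
- by move=> v; apply: (CV_cone _ _ F v).2.
- move=> e a b ea eb.
  rewrite (cone_morphismZ (res_lo a e ea) (CV_cone _ _ F a)) //.
  rewrite (cone_morphismZ (res_hi b e eb) (CV_cone _ _ F b)) //.
  by rewrite (subr0_eq (Ex e a b ea eb)) subrr.
Qed.

Lemma sections_res_eq phi (v v' : vertex Vt) (e : edge Vt) :
  sections phi -> incident v e -> incident v' e ->
  res F v e (phi v) = res F v' e (phi v').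
Proof.
move=> [_ phi_eq] ev ev'.
have same_vertex (u u' : vertex Vt) : (sval u)%:E = (sval u')%:E ->
    res F u e (phi u) = res F u' e (phi u').
  by case: u u' => [x Vx] [y Vy] /= [xy]; subst y; rewrite (Prop_irrelevance Vx Vy).
case: ev => ev; case: ev' => ev'.
- by apply: same_vertex; rewrite -ev -ev'.
- exact/subr0_eq/phi_eq.
- exact/esym/subr0_eq/phi_eq.
- by apply: same_vertex; rewrite -ev -ev'.
Qed.

Lemma cone_over_factor (X : lmodType R) (K : set X) qV qE :
  cone_over F K qV qE -> cone_morphism K sections (fun x v => qV v x).
Proof.
move=> [_ qV_mor _ q_res]; apply: (cone_morphism_tuple qV_mor) => x Kx.
split=> [v|e a b ea eb]; first exact: (qV_mor v).1.
by rewrite (q_res a e (or_introl ea)) // (q_res b e (or_intror eb)) // subrr.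
Qed.

End GlobalSections.
Arguments sections {R Vt} F.

Theorem proposition5p3 (R : realType) (Vt : set R)
    (Vt_lf : locally_finite Vt) (Vt_ne : Vt !=set0) (F : cone_sheaf Vt) :
  exists pE : forall e : edge Vt, dprod (FV F) -> FE F e,
    is_limit F
      [set phi : dprod (FV F) |
         (forall v, CV F v (phi v)) /\
         (forall (e : edge Vt) (a b : vertex Vt),
            (sval e).1 = (sval a)%:E -> (sval e).2 = (sval b)%:E ->
            res F a e (phi a) - res F b e (phi b) = 0)]
      (fun v (phi : dprod (FV F)) => phi v) pE.
Proof.
pose w e := projT1 (cid (edge_has_vertex Vt_ne e)).
have w_incident e : incident (w e) e := projT2 (cid (edge_has_vertex Vt_ne e)).
have proj_mor v : cone_morphism (sections F) (CV F v) (fun phi => phi v).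
  by apply: cone_morphism_proj => phi [].
exists (fun e (phi : dprod (FV F)) => res F (w e) e (phi (w e))); split.
  split=> [||e|v e ve phi phiS].
  - exact: sections_cone.
  - exact: proj_mor.
  - exact: cone_morphism_comp (proj_mor (w e)) (res_mor _ _ F _ _ (w_incident e)).
  - exact: sections_res_eq.
move=> X K qV qE K_over; split.
  exists (fun x v => qV v x); split=> //; first exact: (cone_over_factor K_over).
  by case: K_over => _ _ _ q_res e x Kx; apply: q_res.
move=> u u' [_ u_legs _] [_ u'_legs _] x Kx.
by apply: functional_extensionality_dep => v; rewrite u_legs ?u'_legs.
Qed.
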